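(* For $n,m\ge0$, let $S_{n,m}$ be the signed graph obtained from disjoint copies of the star graphs $S_n$ and $S_m$ by joining their center vertices with a negative edge. Then $$X_{S_{n,m}}=\sum_{i=0}^{n}\sum_{j=0}^{m}\binom{n}{i}\binom{m}{j}(-1)^{i+j}p_{1,0}^{n+m-i-j}\bigl(p_{i+1,0}p_{j+1,0}-p_{i+1,j+1}\bigr).$$
   Context: $S_k$ ($k\ge0$) is the star signed graph with $k+1$ vertices: a center vertex joined by $k$ positive edges to $k$ other vertices. For a signed graph $\Sigma$ (finite graph with edge signs in $\{+,-\}$), a coloring $\kappa:V(\Sigma)\to\mathbb{Z}$ is proper if $\kappa(u)\ne\mathrm{sgn}(e)\kappa(v)$ for every edge $e$ with endpoints $u,v$, and $X_\Sigma=\sum_{\kappa\text{ proper}}\prod_{v}x_{\kappa(v)}$ in commuting variables $x_i$, $i\in\mathbb{Z}$. $p_{a,b}=\sum_{i\in\mathbb{Z}}x_i^ax_{-i}^b$. *)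

From HB Require Import structures.
From mathcomp Require Import all_boot all_order all_algebra.
From mathcomp Require Import mpoly.
Set Implicit Arguments. Unset Strict Implicit. Unset Printing Implicit Defensive.
Import GRing.Theory.
Local Open Scope ring_scope.

(* A signed graph: a finite vertex type and a finite list of edges
   (u, v, s), with s = true meaning a positive edge and s = false a negative
   edge. *)
Record signed_graph := SignedGraph {
  sg_V : finType;
  sg_E : seq (sg_V * sg_V * bool) }.

Definition sgn_mul (s : bool) (z : int) : int := if s then z else - z.

Definition proper (G : signed_graph) (kappa : sg_V G -> int) : bool :=
  all (fun e : sg_V G * sg_V G * bool =>
         let: (u, v, s) := e in kappa u != sgn_mul s (kappa v)) (sg_E G).

(* Truncation to the variables x_{-N}, ..., x_N: the variable x_i (|i| <= N)
   is the mpoly variable 'X_k with k : 'I_(2N+1) and i = k - N. *)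
Definition col (N : nat) (k : 'I_(N.*2.+1)) : int := (k : int) - (N : int).

(* X_Sigma with all variables x_i, |i| > N, set to 0: sum over proper colorings
   with colors in [-N, N]. *)
Definition chromX (N : nat) (G : signed_graph) : {mpoly int[N.*2.+1]} :=
  \sum_(kappa : {ffun sg_V G -> 'I_(N.*2.+1)} | proper (fun v => col (kappa v)))
     \prod_(v : sg_V G) 'X_(kappa v).

(* p_{a,b} = sum_i x_i^a x_{-i}^b, truncated in the same way
   (rev_ord k corresponds to the color -(k - N)). *)
Definition pab (N a b : nat) : {mpoly int[N.*2.+1]} :=
  \sum_(k : 'I_(N.*2.+1)) 'X_k ^+ a * 'X_(rev_ord k) ^+ b.

(* The signed graph S_{n,m}: vertices (option 'I_n) + (option 'I_m), where
   inl None / inr None are the two centers. *)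
Definition Snm_V (n m : nat) : finType := (option 'I_n + option 'I_m)%type.

Definition Snm (n m : nat) : signed_graph :=
  @SignedGraph (Snm_V n m)
    ((inl None, inr None, false)
     :: [seq (inl None, inl (Some i), true) | i : 'I_n]
     ++ [seq (inr None, inr (Some j), true) | j : 'I_m]).

From Pilot Require Import Defs.
From HB Require Import structures.
From mathcomp Require Import all_boot all_order all_algebra.
From mathcomp Require Import mpoly.
From mathcomp Require Import zify ring.
Import GRing.Theory.
Local Open Scope ring_scope.

(* A proper colouring of S_{n,m} is determined by the colours a, b of the two
   centres, subject to b <> -a, together with leaf colours avoiding the colour
   of their centre; summing over the leaves gives
   x_a (p_{1,0} - x_a)^n x_b (p_{1,0} - x_b)^m.  Expanding both powers
   binomially leaves sums of x_a^(i+1) x_b^(j+1) over the pairs with b <> -a,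
   i.e. p_{i+1,0} p_{j+1,0} minus its diagonal part p_{i+1,j+1}. *)

Lemma big_option (R : Type) (idx : R) (op : Monoid.com_law idx) (T : finType)
    (F : option T -> R) :
  \big[op/idx]_o F o = op (F None) (\big[op/idx]_i F (Some i)).
Proof.
rewrite (bigD1 None) //=; congr (op _ _).
rewrite (reindex_omap Some id) /=; last by case.
by apply: eq_bigl => i; rewrite eqxx.
Qed.

Section OffGraphSums.

Variables (R : comNzRingType) (I : finType) (r : I -> I).

Lemma mulr_sums_offgraph (f g : I -> R) :
  (\sum_a f a) * (\sum_b g b) - \sum_a f a * g (r a) =
  \sum_a \sum_(b | b != r a) f a * g b.
Proof.
rewrite big_distrlr -sumrB; apply: eq_bigr => a _.
by rewrite (bigD1 (r a)) //= addrC addKr.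
Qed.

Lemma mulr_subrXn (P x : R) (n : nat) :
  x * (P - x) ^+ n =
  \sum_(i < n.+1) (-1) ^+ i * 'C(n, i)%:R * P ^+ (n - i) * x ^+ i.+1.
Proof.
rewrite exprBn big_distrr /=; apply: eq_bigr => i _.
by rewrite -mulr_natr exprS; ring.
Qed.

Lemma sum_offgraph_binomial (x : I -> R) (P : R) (n m : nat) :
  \sum_a \sum_(b | b != r a) (x a * (P - x a) ^+ n) * (x b * (P - x b) ^+ m) =
  \sum_(i < n.+1) \sum_(j < m.+1)
     ('C(n, i) * 'C(m, j))%:R * (-1) ^+ (i + j) * P ^+ (n + m - i - j)
     * \sum_a \sum_(b | b != r a) x a ^+ i.+1 * x b ^+ j.+1.
Proof.
under eq_bigr do under eq_bigr do rewrite !mulr_subrXn big_distrlr.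
under eq_bigr do rewrite exchange_big.
rewrite exchange_big; apply: eq_bigr => i _.
under eq_bigr do rewrite exchange_big.
rewrite exchange_big; apply: eq_bigr => j _.
rewrite big_distrr /=; apply: eq_bigr => a _; rewrite big_distrr /=; apply: eq_bigr => b _.
have -> : (n + m - i - j = (n - i) + (m - j))%N by have := ltn_ord i; have := ltn_ord j; lia.
by rewrite natrM exprD exprD; ring.
Qed.

End OffGraphSums.

Lemma col_inj (N : nat) : injective (@Defs.col N).
Proof. by move=> a b /addIr /eqP; rewrite eqz_nat => /eqP /val_inj. Qed.

Lemma col_rev_ord (N : nat) (k : 'I_(N.*2.+1)) : Defs.col (rev_ord k) = - Defs.col k.
Proof. rewrite /Defs.col /=; have := ltn_ord k; lia. Qed.

Lemma pab_offgraph (N a b : nat) :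
  pab N a 0 * pab N b 0 - pab N a b =
  \sum_ca \sum_(cb | cb != rev_ord ca) 'X_ca ^+ a * 'X_cb ^+ b.
Proof.
rewrite -mulr_sums_offgraph /pab.
by congr (_ * _ - _); apply: eq_bigr => k _; rewrite expr0 mulr1.
Qed.

Lemma pab_1_0 (N : nat) : pab N 1 0 = \sum_k 'X_k.
Proof. by apply: eq_bigr => k _; rewrite expr0 mulr1. Qed.

Definition Snm_family {K : finType} (n m : nat) (ca cb : K) :
    Snm_V n m -> pred K :=
  fun v => match v with
           | inl None => pred1 ca | inl (Some _) => predC1 ca
           | inr None => pred1 cb | inr (Some _) => predC1 cb
           end.

Lemma proper_Snm (n m N : nat) (k : {ffun Snm_V n m -> 'I_(N.*2.+1)}) :
  Defs.proper (G := Snm n m) (fun v => Defs.col (k v)) =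
  (k (inr None) != rev_ord (k (inl None)))
  && (k \in family (Snm_family n m (k (inl None)) (k (inr None)))).
Proof.
rewrite /Defs.proper /= all_cat !all_map; congr (_ && _).
  rewrite -col_rev_ord (inj_eq (@col_inj N)).
  by rewrite eq_sym (can2_eq rev_ordK rev_ordK).
apply/andP/familyP => [[/allP leftP /allP rightP] [[i|]|[j|]] |leavesP].
- by have := leftP i (mem_index_enum i); rewrite /= (inj_eq (@col_inj N)) eq_sym.
- by rewrite /= inE.
- by have := rightP j (mem_index_enum j); rewrite /= (inj_eq (@col_inj N)) eq_sym.
- by rewrite /= inE.
split; apply/allP => v _; rewrite /= (inj_eq (@col_inj N)) eq_sym.
  exact: (leavesP (inl (Some v))).
exact: (leavesP (inr (Some v))).
Qed.

Lemma chromX_Snm_centers (n m N : nat) :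
  chromX N (Snm n m) =
  \sum_ca \sum_(cb | cb != rev_ord ca)
     \sum_(k in family (Snm_family n m ca cb)) \prod_v 'X_(k v).
Proof.
rewrite /chromX (partition_big (fun k : {ffun Snm_V n m -> _} =>
                                  (k (inl None), k (inr None)))
                               (fun c => c.2 != rev_ord c.1)); last first.
  by move=> k; rewrite proper_Snm => /andP[].
rewrite [RHS]pair_big_dep /=; apply: eq_bigr => -[ca cb] /= cbP.
apply: eq_bigl => k; rewrite proper_Snm.
apply/andP/idP => [[/andP[_ famk] /eqP[<- <-]] // | famk].
have /familyP famP := famk.
have /eqP kca := famP (inl None); have /eqP kcb := famP (inr None).
by rewrite kca kcb cbP famk.
Qed.

Lemma sum_family_Snm {R : comNzRingType} {K : finType} (x : K -> R)
    (n m : nat) (ca cb : K) :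
  \sum_(k in family (Snm_family n m ca cb)) \prod_v x (k v) =
  (x ca * (\sum_c x c - x ca) ^+ n) * (x cb * (\sum_c x c - x cb) ^+ m).
Proof.
have sum_avoid c : \sum_(d | d != c) x d = \sum_d x d - x c.
  by rewrite [in RHS](bigD1 c) //= addrC addrK.
rewrite -(bigA_distr_big_dep _ (fun _ => x)) big_sumType !big_option /=.
by rewrite !big_pred1_eq !sum_avoid !prodr_const !card_ord.
Qed.

Theorem lemma6p6 (n m N : nat) :
  chromX N (Snm n m) =
  \sum_(i < n.+1) \sum_(j < m.+1)
     ('C(n, i) * 'C(m, j))%:R * (-1) ^+ (i + j)
     * pab N 1 0 ^+ (n + m - i - j)
     * (pab N i.+1 0 * pab N j.+1 0 - pab N i.+1 j.+1).
Proof.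
rewrite chromX_Snm_centers.
under eq_bigr do under eq_bigr do rewrite (sum_family_Snm (fun c => 'X_c)).
rewrite sum_offgraph_binomial -pab_1_0.
by apply: eq_bigr => i _; apply: eq_bigr => j _; rewrite pab_offgraph.
Qed.
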